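(* Let $k\ge 3$ and let $\varepsilon\in(0,1)$ with $1/\varepsilon>k$. Let $m\in\mathbb{N}$ satisfy $1/m<\varepsilon\le 1/(m-1)$ and put $N=m^2$. Let $E\subseteq[0,1]$ be a set that $\varepsilon$-avoids $k$APs. Then for every $j\ge 0$ and every $N$-adic interval $I=[iN^{-j},(i+1)N^{-j})$, the number of $N$-adic subintervals of $I$ of length $N^{-j-1}$ that intersect $E$ is strictly less than $m\,(r_k(m)+1)$.
   Context: A $k$-term arithmetic progression ($k$AP) is a set $P=\{x, x+\lambda, \dots, x+(k-1)\lambda\}\subset\mathbb{R}$ with $\lambda>0$, called the gap length of $P$. For $M\in\mathbb{N}$, $r_k(M)$ denotes the maximal cardinality of a subset of $\{1,\dots,M\}$ containing no $k$AP. A set $E\subset\mathbb{R}$ $\varepsilon$-avoids $k$APs if for every $k$AP $P$ with gap length $\lambda$ one has $\sup_{p\in P}\inf_{x\in E}|x-p|\ge\varepsilon\lambda$. *)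

From Stdlib Require Import Reals List.
Import ListNotations.
Open Scope R_scope.

Definition kAP_point (x lam : R) (t : nat) : R := x + INR t * lam.

(* E epsilon-avoids kAPs: for every kAP P with gap lam > 0,
   sup_{p in P} inf_{e in E} |e - p| >= eps * lam.
   Since P is finite, the sup is a max, so this says: some point p of P has
   inf_{e in E} |e - p| >= eps*lam, i.e. |e - p| >= eps*lam for all e in E. *)
Definition eps_avoids_kAPs (k : nat) (eps : R) (E : R -> Prop) : Prop :=
  forall x lam : R, 0 < lam ->
    exists t : nat, (t < k)%nat /\
      forall e : R, E e -> eps * lam <= Rabs (e - kAP_point x lam t).

Definition kAP_free_nat (k : nat) (A : list nat) : Prop :=
  ~ exists x lam : R, 0 < lam /\
      forall t : nat, (t < k)%nat -> In (kAP_point x lam t) (map INR A).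

Definition subset_1_M (M : nat) (A : list nat) : Prop :=
  NoDup A /\ forall n, In n A -> (1 <= n <= M)%nat.

Definition is_rk (k M r : nat) : Prop :=
  (exists A, subset_1_M M A /\ kAP_free_nat k A /\ length A = r) /\
  (forall A, subset_1_M M A -> kAP_free_nat k A -> (length A <= r)%nat).

Definition sub_left (N : nat) (i : Z) (j s : nat) : R :=
  IZR i / INR N ^ j + INR s / INR N ^ (S j).

Definition meets_subinterval (E : R -> Prop) (N : nat) (i : Z) (j s : nat) : Prop :=
  exists e, E e /\ sub_left N i j s <= e < sub_left N i j s + / INR N ^ (S j).

From Stdlib Require Import Reals List Lra Lia FinFun.
Open Scope R_scope.

(* Write the index s < m^2 of a subinterval in base m as s = a m + b.  For a
   fixed low digit b, the high digits a of the subintervals meeting E contain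
   no kAP: a kAP of high digits with gap lam >= 1 gives a kAP of subintervals
   with gap lam m N^{-j-1}, each of which meets E, so every point of that kAP
   is within N^{-j-1} of E, while eps-avoidance puts some point at distance
   at least eps lam m N^{-j-1} > N^{-j-1} (as eps m > 1).  Hence each of the m
   digit classes has at most r_k(m) elements, and there are at most m r_k(m)
   subintervals meeting E. *)

Lemma avoids_kAPs_gap_lt (k : nat) (eps : R) (E : R -> Prop) (x lam d : R) :
  eps_avoids_kAPs k eps E -> 0 < lam ->
  (forall t, (t < k)%nat ->
     exists e, E e /\ kAP_point x lam t <= e < kAP_point x lam t + d) ->
  eps * lam < d.
Proof.
  intros Hav Hlam Hmeet.
  destruct (Hav x lam Hlam) as [t [Ht Hfar]].
  destruct (Hmeet t Ht) as [e [He Hclose]].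
  specialize (Hfar e He).
  rewrite Rabs_right in Hfar; lra.
Qed.

Lemma kAP_of_naturals_gap_ge_1 (k : nat) (x lam : R) :
  (2 <= k)%nat -> 0 < lam ->
  (forall t, (t < k)%nat -> exists n : nat, INR n = kAP_point x lam t) ->
  1 <= lam.
Proof.
  intros Hk Hlam Hnat.
  destruct (Hnat 0%nat ltac:(lia)) as [n0 H0].
  destruct (Hnat 1%nat ltac:(lia)) as [n1 H1].
  unfold kAP_point in H0, H1; simpl in H0, H1.
  assert (Hlt : (n0 < n1)%nat) by (apply INR_lt; lra).
  apply le_INR in Hlt; rewrite S_INR in Hlt; lra.
Qed.

Lemma sub_left_digits (N : nat) (i : Z) (j m a b : nat) :
  sub_left N i j (a * m + b) =
  sub_left N i j b + INR a * (INR m / INR N ^ S j).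
Proof. unfold sub_left, Rdiv; rewrite plus_INR, mult_INR; ring. Qed.

Definition high_digits (S : list nat) (m b : nat) : list nat :=
  filter (fun a => if in_dec Nat.eq_dec (a * m + b)%nat S then true else false)
    (seq 0 m).

Lemma in_high_digits (S : list nat) (m b a : nat) :
  In a (high_digits S m b) <-> (a < m)%nat /\ In (a * m + b)%nat S.
Proof.
  unfold high_digits; rewrite filter_In, in_seq.
  destruct (in_dec Nat.eq_dec (a * m + b)%nat S); split; intuition (discriminate || lia).
Qed.

(* Shifted by one so that the digits 0..m-1 become a subset of {1,...,m}. *)
Lemma high_digits_subset_1_M (S : list nat) (m b : nat) :
  subset_1_M m (map Datatypes.S (high_digits S m b)).
Proof.
  split.
  - apply Injective_map_NoDup; [intros u v Huv; injection Huv; auto|].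
    apply NoDup_filter, seq_NoDup.
  - intros n Hn; apply in_map_iff in Hn as [a [<- Ha]].
    apply in_high_digits in Ha; lia.
Qed.

Lemma high_digits_kAP_free (k : nat) (eps : R) (E : R -> Prop)
    (N m : nat) (i : Z) (j b : nat) (S : list nat) :
  (2 <= k)%nat -> (0 < N)%nat -> 1 < INR m * eps ->
  eps_avoids_kAPs k eps E ->
  (forall s, In s S -> meets_subinterval E N i j s) ->
  kAP_free_nat k (map Datatypes.S (high_digits S m b)).
Proof.
  intros Hk HN Hme Hav Hmeets [x [lam [Hlam Hap]]].
  assert (Hdigit : forall t, (t < k)%nat -> exists a,
             INR a = kAP_point (x - 1) lam t /\ In (a * m + b)%nat S).
  { intros t Ht; destruct (proj1 (in_map_iff _ _ _) (Hap t Ht)) as [n [Hn Hin]].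
    apply in_map_iff in Hin as [a [<- Ha]].
    exists a; split; [rewrite S_INR in Hn; unfold kAP_point in *; lra|].
    exact (proj2 (proj1 (in_high_digits _ _ _ _) Ha)). }
  assert (Hlam1 : 1 <= lam).
  { apply (kAP_of_naturals_gap_ge_1 k x lam Hk Hlam).
    intros t Ht; destruct (Hdigit t Ht) as [a [Ha _]].
    exists (Datatypes.S a); rewrite S_INR, Ha; unfold kAP_point; ring. }
  set (d := / INR N ^ Datatypes.S j).
  assert (Hd : 0 < d) by (apply Rinv_0_lt_compat, pow_lt, lt_0_INR; lia).
  assert (Hm : 0 < INR m) by (destruct m; simpl in Hme; [lra | apply lt_0_INR; lia]).
  assert (Hgap : eps * (lam * INR m * d) < d).
  { apply (avoids_kAPs_gap_lt k eps E
             (sub_left N i j b + (x - 1) * INR m * d) _ _ Hav).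
    - repeat apply Rmult_lt_0_compat; lra.
    - intros t Ht; destruct (Hdigit t Ht) as [a [Ha HaS]].
      destruct (Hmeets _ HaS) as [e [He Hin]].
      rewrite sub_left_digits, Ha in Hin; unfold Rdiv in Hin; fold d in Hin.
      exists e; split; [exact He|].
      replace (kAP_point _ _ t)
        with (sub_left N i j b + kAP_point (x - 1) lam t * (INR m * d))
        by (unfold kAP_point; ring).
      exact Hin. }
  assert (0 <= (INR m * eps) * d * (lam - 1))
    by (apply Rmult_le_pos; [apply Rmult_le_pos|]; lra).
  nra.
Qed.

Lemma length_flat_map_le {A B : Type} (f : A -> list B) (l : list A) (r : nat) :
  (forall a, In a l -> length (f a) <= r)%nat ->
  (length (flat_map f l) <= length l * r)%nat.
Proof.
  induction l as [|a l IH]; intros Hf; simpl; [lia|].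
  rewrite length_app.
  pose proof (Hf a (or_introl eq_refl)).
  pose proof (IH (fun a' Ha' => Hf a' (or_intror Ha'))).
  lia.
Qed.

Lemma incl_flat_map_high_digits (S : list nat) (m : nat) :
  (forall s, In s S -> s < m ^ 2)%nat ->
  incl S (flat_map (fun b => map (fun a => a * m + b)%nat (high_digits S m b))
            (seq 0 m)).
Proof.
  intros Hlt s Hs; specialize (Hlt s Hs); simpl in Hlt.
  assert (Hm : (0 < m)%nat) by lia.
  assert (Hdm : (s = s / m * m + s mod m)%nat)
    by (rewrite Nat.mul_comm; apply Nat.div_mod; lia).
  apply in_flat_map; exists (s mod m); split.
  - apply in_seq; pose proof (Nat.mod_upper_bound s m); lia.
  - apply in_map_iff; exists (s / m)%nat; split; [now rewrite <- Hdm|].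
    apply in_high_digits; rewrite <- Hdm; split; [|exact Hs].
    apply Nat.Div0.div_lt_upper_bound; lia.
Qed.

Lemma length_le_of_high_digits (S : list nat) (m r : nat) :
  NoDup S -> (forall s, In s S -> s < m ^ 2)%nat ->
  (forall b, b < m -> length (high_digits S m b) <= r)%nat ->
  (length S <= m * r)%nat.
Proof.
  intros HS Hlt Hr.
  eapply Nat.le_trans.
  - exact (NoDup_incl_length HS (incl_flat_map_high_digits S m Hlt)).
  - rewrite <- (length_seq m 0) at 2.
    apply length_flat_map_le; intros b Hb.
    rewrite length_map; apply Hr; apply in_seq in Hb; lia.
Qed.

Theorem mainTheorem10 :
  forall (k : nat) (eps : R) (m r : nat) (E : R -> Prop),
    (3 <= k)%nat ->
    0 < eps < 1 ->
    / eps > INR k ->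
    (2 <= m)%nat ->
    / INR m < eps <= / INR (m - 1) ->
    is_rk k m r ->
    (forall x, E x -> 0 <= x <= 1) ->
    eps_avoids_kAPs k eps E ->
    forall (j : nat) (i : Z) (S : list nat),
      NoDup S ->
      (forall s, In s S -> (s < m ^ 2)%nat /\ meets_subinterval E (m ^ 2) i j s) ->
      (length S < m * (r + 1))%nat.
Proof.
  intros k eps m r E Hk _ _ Hm [Hme _] [_ Hrk] _ Hav j i S HS HSs.
  assert (Hmeps : 1 < INR m * eps).
  { assert (0 < INR m) by (apply lt_0_INR; lia).
    apply (Rmult_lt_compat_l (INR m)) in Hme; [|lra].
    rewrite Rinv_r in Hme; lra. }
  enough (length S <= m * r)%nat by lia.
  apply length_le_of_high_digits; [exact HS | apply HSs |].
  intros b _; rewrite <- (length_map Datatypes.S).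
  apply Hrk; [apply high_digits_subset_1_M|].
  apply (high_digits_kAP_free k eps E (m ^ 2) m i j b S); [lia | simpl; nia | exact Hmeps | exact Hav |].
  intros s Hs; apply HSs, Hs.
Qed.
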